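(* Let $h,m$ be positive integers and let $f:\mathbb N\to\mathbb N$ be an increasing computable function such that for every satisfiable $\mathrm{CC}^h[m]$-circuit $\Gamma$ with $n$ inputs, among $2^{f(|\Gamma|)}$ independent uniformly random tuples from $\{0,1\}^n$ there is, with probability at least $1/2$, a tuple on which $\Gamma$ outputs $1$. Then $f^{-1}(n)\le\gamma_{h,m}(n+1)$ (for every $n$ for which $\gamma_{h,m}(n+1)$ is defined).
   Context: For an integer $m\ge 1$ and $A\subseteq\{0,\dots,m-1\}$, a gate $\mathrm{MOD}_m^A$ takes finitely many Boolean inputs (counted with multiplicity) and outputs $1$ if their sum modulo $m$ lies in $A$, and $0$ otherwise. A $\mathrm{CC}^h[m]$-circuit is a depth-$h$ Boolean circuit all of whose gates are of the form $\mathrm{MOD}_m^A$ ($A$ may vary between gates), with Boolean variable inputs and multiple wires allowed. $|\Gamma|$ is the number of gates of $\Gamma$. $\gamma_{h,m}(n)$ is the size of the smallest $\mathrm{CC}^h[m]$-circuit computing the $n$-ary conjunction $\mathrm{AND}_n$ (partial function). For an increasing function $f$, $f^{-1}(k)$ is the largest $n$ with $f(n)\le k$. *)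

From mathcomp Require Import all_boot all_order.
Set Implicit Arguments. Unset Strict Implicit. Unset Printing Implicit Defensive.

(* CC^h[m] circuits as DAGs: a circuit is a nonempty list of gates; each gate
   may read input variables (WVar j, j < n) or strictly earlier gates
   (WGate k); the output of the circuit is its last gate.  Multiple wires are
   modelled by repetitions in the input list of a gate. *)
Inductive wire := WVar of nat | WGate of nat.

(* a gate MOD_m^A : (A, list of input wires) *)
Definition gate := (seq nat * seq wire)%type.
Definition circuit := seq gate.

Definition wire_val (x vals : seq bool) (w : wire) : bool :=
  match w with WVar j => nth false x j | WGate k => nth false vals k end.

Definition gate_val (m : nat) (x vals : seq bool) (g : gate) : bool :=
  ((\sum_(w <- g.2) (wire_val x vals w : nat)) %% m \in g.1).

Definition gate_vals (m : nat) (x : seq bool) (C : circuit) : seq bool :=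
  foldl (fun vals g => rcons vals (gate_val m x vals g)) [::] C.

Definition eval (m : nat) (C : circuit) (x : seq bool) : bool :=
  last false (gate_vals m x C).

Definition wire_depth (ds : seq nat) (w : wire) : nat :=
  match w with WVar _ => 0 | WGate k => nth 0 ds k end.

Definition gate_depths (C : circuit) : seq nat :=
  foldl (fun ds g => rcons ds (\max_(w <- g.2) wire_depth ds w).+1) [::] C.

Definition depth (C : circuit) : nat := \max_(d <- gate_depths C) d.

Definition csize (C : circuit) : nat := size C.

Definition wf_circuit (m n : nat) (C : circuit) : Prop :=
  C <> [::] /\
  forall i, i < size C ->
    all (fun a => a < m) (nth ([::], [::]) C i).1 /\
    all (fun w => match w with WVar j => j < n | WGate k => k < i end)
        (nth ([::], [::]) C i).2.

Definition CC_circuit (h m n : nat) (C : circuit) : Prop :=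
  wf_circuit m n C /\ depth C <= h.

Definition satisfiable (m n : nat) (C : circuit) : Prop :=
  exists x : n.-tuple bool, eval m C x.

Definition computes_AND (m n : nat) (C : circuit) : Prop :=
  forall x : n.-tuple bool, eval m C x = all id x.

(* gamma_{h,m}(n) is defined and equals s *)
Definition gamma_is (h m n s : nat) : Prop :=
  (exists C, [/\ CC_circuit h m n C, computes_AND m n C & csize C = s]) /\
  (forall C, CC_circuit h m n C -> computes_AND m n C -> s <= csize C).

(* Pr[among N independent uniform tuples of {0,1}^n some satisfies C] >= 1/2,
   stated by counting over the uniform space of N-tuples of inputs. *)
Definition hit_prob_ge_half (m n N : nat) (C : circuit) : Prop :=
  #|{ffun 'I_N -> n.-tuple bool}| <=
    2 * #|[set t : {ffun 'I_N -> n.-tuple bool} | [exists i, eval m C (t i)]]|.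

From mathcomp Require Import all_boot all_order.

Set Implicit Arguments.
Unset Strict Implicit.
Unset Printing Implicit Defensive.

(* An AND circuit is satisfied only by the all-ones input, so among N uniform
   samples it is hit with probability at most N / 2^n (union bound).  If
   2^f(s) samples suffice for the AND circuit of size s on n+1 inputs, then
   2^(n+1) <= 2 * 2^f(s), i.e. n <= f(s); as f is increasing, f(k) <= n
   forces k <= s. *)

Lemma leq_card_bigcup (I T : finType) (A : I -> {set T}) :
  #|\bigcup_i A i| <= \sum_i #|A i|.
Proof.
elim/big_rec2: _ => [|i n U _ leUn]; first by rewrite cards0.
by rewrite (leq_trans (leq_card_setU _ _).1) ?leq_add2l.
Qed.

Lemma card_ffun_fixed (I T : finType) (i : I) (a : T) :
  #|[set t : {ffun I -> T} | t i == a]| = #|T| ^ #|I|.-1.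
Proof.
pose F j := if j == i then pred1 a else predT.
have -> : #|[set t : {ffun I -> T} | t i == a]| = #|family F|.
  apply: eq_card => t; rewrite inE.
  apply/eqP/familyP => [ti j | /(_ i)]; last by rewrite /F eqxx => /eqP.
  by rewrite /F; case: eqP => [->|_]; rewrite ?inE ?ti.
rewrite card_family foldrE big_map big_enum /= (bigD1 i) //=.
rewrite /F eqxx card1 mul1n.
rewrite (eq_bigr (fun _ => #|T|)) => [|j /negbTE -> //].
by rewrite prod_nat_const -(cardC1 i); congr (_ ^ _); apply: eq_card.
Qed.

Lemma card_ffun_hitting (I T : finType) (a : T) :
  #|[set t : {ffun I -> T} | [exists i, t i == a]]| <= #|I| * #|T| ^ #|I|.-1.
Proof.
have -> : [set t : {ffun I -> T} | [exists i, t i == a]] =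
          \bigcup_i [set t : {ffun I -> T} | t i == a].
  apply/setP => t; rewrite inE.
  apply/existsP/bigcupP => [[i] ti | [i _]]; first by exists i; rewrite ?inE.
  by rewrite inE; exists i.
apply: leq_trans (leq_card_bigcup _) _.
by rewrite (eq_bigr _ (fun i _ => card_ffun_fixed i a)) sum_nat_const.
Qed.

Definition ones (n : nat) : n.-tuple bool := [tuple of nseq n true].

Lemma all_id_tuple_ones (n : nat) (x : n.-tuple bool) :
  all id x = (x == ones n).
Proof.
apply/allP/eqP => [x1 | -> b /nseqP [-> //]].
by apply: eq_from_tnth => j; rewrite /ones tnth_nseq; apply/x1/mem_tnth.
Qed.

Lemma computes_AND_satisfiable (m n : nat) (C : circuit) :
  computes_AND m n C -> satisfiable m n C.
Proof. by move=> C_and; exists (ones n); rewrite C_and all_id_tuple_ones. Qed.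

Lemma computes_AND_hit_prob (m n e : nat) (C : circuit) :
  computes_AND m n C -> hit_prob_ge_half m n (2 ^ e) C -> n <= e.+1.
Proof.
move=> C_and; rewrite /hit_prob_ge_half; set N := 2 ^ e.
have N_gt0 : 0 < N by rewrite expn_gt0.
have -> : [set t : {ffun 'I_N -> n.-tuple bool} | [exists i, eval m C (t i)]] =
          [set t : {ffun 'I_N -> n.-tuple bool} | [exists i, t i == ones n]].
  by apply/setP => t; rewrite !inE; apply: eq_existsb => i;
    rewrite C_and all_id_tuple_ones.
move/leq_trans/(_ (leq_mul (leqnn 2) (card_ffun_hitting 'I_N (ones n)))).
rewrite card_ffun !card_tuple card_bool card_ord -(prednK N_gt0) expnS.
by rewrite mulnA leq_mul2r !expn_eq0 /= prednK // -expnS leq_exp2l.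
Qed.

Theorem proposition6p3 (h m : nat) (f : nat -> nat) :
  0 < h -> 0 < m ->
  {homo f : x y / x < y} ->
  (forall (n : nat) (C : circuit), CC_circuit h m n C -> satisfiable m n C ->
     hit_prob_ge_half m n (2 ^ f (csize C)) C) ->
  forall n s : nat, gamma_is h m n.+1 s ->
  forall k : nat, f k <= n -> k <= s.
Proof.
move=> _ _ f_mono hit n s [[C [C_CC C_and <-]] _] k fk_le_n.
have n_le_fs : n <= f (csize C).
  apply: (computes_AND_hit_prob C_and).
  exact: hit _ _ C_CC (computes_AND_satisfiable C_and).
rewrite leqNgt; apply/negP => /f_mono lt_fs_fk.
by move: (leq_trans lt_fs_fk fk_le_n); rewrite ltnNge n_le_fs.
Qed.
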